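(* Let $n\ge3$, $K\ge1$, and $\underline a=(a_1,\dots,a_K)\in(\mathbb{C}^\times)^K$ with $a_k\neq a_j^{\pm1}$ for all $k\neq j$. If $a_1=1$ and $a_k\neq-1$ for every $k\ge2$, then the image of $\psi_{\underline a}$ is isomorphic to the direct sum of one copy of $sp_{2n}$ and $K-1$ copies of $sl_{2n}$.
   Context: For $n\geq 3$, $M_n=(m_{i,j})$ is the $n\times n$ integer matrix with $m_{i,i}=2$, $m_{i,i+1}=m_{i+1,i}=-1$ ($1\le i\le n-1$), $m_{1,n}=m_{n,1}=1$, all other entries $0$. $\mathrm{gim}(M_n)$ is the complex Lie algebra generated by $e_i,f_i,h_i$ ($1\le i\le n$) with relations: (R1) $[h_i,e_j]=m_{i,j}e_j$, $[h_i,f_j]=-m_{i,j}f_j$, $[e_i,f_i]=h_i$ for all $i,j$; (R2) for $i\ne j$ with $m_{i,j}\le0$: $[e_i,f_j]=0=[f_i,e_j]$, $(\mathrm{ad}\,e_i)^{1-m_{i,j}}e_j=0=(\mathrm{ad}\,f_i)^{1-m_{i,j}}f_j$; (R3) for $i\ne j$ with $m_{i,j}>0$: $[e_i,e_j]=0=[f_i,f_j]$, $(\mathrm{ad}\,e_i)^{m_{i,j}+1}f_j=0=(\mathrm{ad}\,f_i)^{m_{i,j}+1}e_j$. For $a\in\mathbb{C}^\times$, $\psi_a:\mathrm{gim}(M_n)\to sl_{2n}$ is the Lie algebra homomorphism determined by $\psi_a(e_i)=E_{i,i+1}-E_{n+i+1,n+i}$, $\psi_a(f_i)=E_{i+1,i}-E_{n+i,n+i+1}$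 ($1\le i\le n-1$), $\psi_a(e_n)=E_{n,n+1}+a^{-1}E_{1,2n}$, $\psi_a(f_n)=E_{n+1,n}+aE_{2n,1}$, where $E_{i,j}$ are matrix units. For $\underline a=(a_1,\dots,a_K)$, $\psi_{\underline a}=\bigoplus_{k=1}^K\psi_{a_k}:\mathrm{gim}(M_n)\to sl_{2n}^{\oplus K}$, $x\mapsto(\psi_{a_1}(x),\dots,\psi_{a_K}(x))$. *)

From HB Require Import structures.
From mathcomp Require Import all_boot all_order all_algebra.
From mathcomp Require Import reals.
From mathcomp.real_closed Require Import complex.
Set Implicit Arguments. Unset Strict Implicit. Unset Printing Implicit Defensive.
Import Order.TTheory GRing.Theory Num.Theory.
Local Open Scope ring_scope.

Section LieDefs.
Variable F : fieldType.

Definition lie (m : nat) (X Y : 'M[F]_m) : 'M[F]_m := X *m Y - Y *m X.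

(* Matrix unit E_{i,j}, with 1-based indices i, j (as in the paper). *)
Definition Eunit (m : nat) (i j : nat) : 'M[F]_m :=
  \matrix_(r < m, c < m) ((r.+1 == i) && (c.+1 == j))%:R.

(* The homomorphism psi_a : gim(M_n) -> sl_{2n} on the generators
   (indices i = 1..n); 2n is written n + n. *)
Definition psi_e (n : nat) (a : F) (i : nat) : 'M[F]_(n + n) :=
  if i == n then Eunit _ n n.+1 + a^-1 *: Eunit _ 1 (n + n)
  else Eunit _ i i.+1 - Eunit _ (n + i).+1 (n + i).

Definition psi_f (n : nat) (a : F) (i : nat) : 'M[F]_(n + n) :=
  if i == n then Eunit _ n.+1 n + a *: Eunit _ (n + n) 1
  else Eunit _ i.+1 i - Eunit _ (n + i) (n + i).+1.

(* psi_a(h_i) = psi_a([e_i,f_i]) = [psi_a(e_i), psi_a(f_i)]. *)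
Definition psi_h (n : nat) (a : F) (i : nat) : 'M[F]_(n + n) :=
  lie (psi_e n a i) (psi_f n a i).

Definition lieK (K m : nat) (x y : {ffun 'I_K -> 'M[F]_m}) : {ffun 'I_K -> 'M[F]_m} :=
  [ffun k => lie (x k) (y k)].

Inductive lie_gen (V : lmodType F) (br : V -> V -> V) (S : V -> Prop) : V -> Prop :=
| lie_gen_base x : S x -> lie_gen br S x
| lie_gen_zero : lie_gen br S 0
| lie_gen_add x y : lie_gen br S x -> lie_gen br S y -> lie_gen br S (x + y)
| lie_gen_scale (c : F) x : lie_gen br S x -> lie_gen br S (c *: x)
| lie_gen_br x y : lie_gen br S x -> lie_gen br S y -> lie_gen br S (br x y).

Definition psiK_gens (n K : nat) (a : 'I_K -> F) (x : {ffun 'I_K -> 'M[F]_(n + n)}) : Prop :=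
  exists2 i : nat, (1 <= i <= n)%N &
    [\/ x = [ffun k => psi_e n (a k) i],
        x = [ffun k => psi_f n (a k) i] |
        x = [ffun k => psi_h n (a k) i]].

(* Image of psi_{\underline a}: the Lie subalgebra of sl_{2n}^{(+)K} generated by
   the images of the generators of gim(M_n). *)
Definition psiK_image (n K : nat) (a : 'I_K -> F) : {ffun 'I_K -> 'M[F]_(n + n)} -> Prop :=
  lie_gen (@lieK K (n + n)) (psiK_gens a).

Definition Jsymp (n : nat) : 'M[F]_(n + n) := block_mx 0 1%:M (- 1%:M) 0.
Definition is_sp (n : nat) (X : 'M[F]_(n + n)) : Prop :=
  X^T *m Jsymp n + Jsymp n *m X = 0.
Definition is_sl (m : nat) (X : 'M[F]_m) : Prop := \tr X = 0.

Definition sp_sl_sum (n K : nat) (z : 'M[F]_(n + n) * {ffun 'I_K.-1 -> 'M[F]_(n + n)}) : Prop :=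
  is_sp z.1 /\ forall k, is_sl (z.2 k).
Definition lie_sum (n K : nat) (z w : 'M[F]_(n + n) * {ffun 'I_K.-1 -> 'M[F]_(n + n)}) :=
  (lie z.1 w.1, lieK z.2 w.2).

Definition lie_iso (V W : lmodType F) (brV : V -> V -> V) (brW : W -> W -> W)
  (L : V -> Prop) (M : W -> Prop) : Prop :=
  exists phi : V -> W,
    [/\ forall x, L x -> M (phi x),
        forall (c : F) x y, L x -> L y -> phi (c *: x + y) = c *: phi x + phi y,
        forall x y, L x -> L y -> phi (brV x y) = brW (phi x) (phi y),
        forall x y, L x -> L y -> phi x = phi y -> x = y &
        forall z, M z -> exists2 x, L x & phi x = z].

End LieDefs.

From HB Require Import structures.
From mathcomp Require Import all_boot all_order all_algebra.
From mathcomp Require Import reals.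
From mathcomp.real_closed Require Import complex.
From mathcomp Require Import zify ring.
Set Implicit Arguments. Unset Strict Implicit. Unset Printing Implicit Defensive.
Import Order.TTheory GRing.Theory Num.Theory.
Local Open Scope ring_scope.

(* For i < n the images of e_i
   and f_i are the block-diagonal matrices diag(E_{i,i+1}, -E_{i+1,i}) and
   diag(E_{i+1,i}, -E_{i,i+1}) in every component; their brackets, together
   with [psi(e_n), psi(f_n)], produce diag(A, -A^T) for every A (this uses
   that 2 is invertible).  Bracketing psi(e_n) and psi(f_n) with these yields
   every k |-> [[0, Y + a_k^-1 Y^T], [0, 0]] and every
   k |-> [[0, 0], [Z + a_k Z^T, 0]].  The bracket of the two elements with
   Y = Z = 1 acts on them by the scalars 2 mu_k and -2 mu_k, where
   mu_k = (1 + a_k^-1)(1 + a_k) = 2 + a_k + a_k^-1 are pairwise distinct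
   because a_k <> a_j^(+-1); Lagrange interpolation in its adjoint action
   therefore isolates each component.  In component k the corners
   Y + a_k^-1 Y^T exhaust all matrices when a_k <> +-1 and the symmetric ones
   when a_k = 1, and such corners generate sl_2n, resp. sp_2n.  Conversely all
   generators lie in sp_2n in a component with a_k = 1, and in sl_2n
   everywhere. *)

Section MatrixUnits.
Variable F : fieldType.
Local Notation E := (@Eunit F).

Lemma EunitE m i j (r c : 'I_m) : E m i j r c = ((r.+1 == i) && (c.+1 == j))%:R.
Proof. by rewrite mxE. Qed.

Lemma Eunit_eq0 m i j : [|| i == 0, m < i, j == 0 | m < j]%N -> E m i j = 0.
Proof.
move=> out; apply/matrixP=> r c; rewrite EunitE mxE.
case: eqP => // ri; case: eqP => //= cj.
by move: out (ltn_ord r) (ltn_ord c); lia.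
Qed.

Lemma Eunit_mul m i j k l :
  E m i j *m E m k l = if (j == k) && (0 < j <= m)%N then E m i l else 0.
Proof.
apply/matrixP=> r c; rewrite mxE; under eq_bigr => s _ do rewrite !EunitE.
case: ifP => [/andP[/eqP <- j_in] | jk].
  have j1_lt : (j.-1 < m)%N by lia.
  rewrite (bigD1 (Ordinal j1_lt)) //= big1 ?addr0.
    by rewrite EunitE prednK ?eqxx ?andbT -?natrM ?mulnb //; lia.
  move=> s /eqP s_ne; case: (s.+1 =P j) => [sj | _]; last by rewrite !andbF mul0r.
  by case: s_ne; apply: val_inj => /=; lia.
rewrite mxE big1 // => s _.
case: (s.+1 =P j) => [sj | _]; last by rewrite !andbF mul0r.
case: (s.+1 =P k) => [sk | _]; last by rewrite andFb mulr0.
by move: jk (ltn_ord s); rewrite -sj -sk eqxx /=; lia.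
Qed.

Lemma trmx_Eunit m i j : (E m i j)^T = E m j i.
Proof. by apply/matrixP=> r c; rewrite mxE !EunitE andbC. Qed.

Lemma delta_mx_Eunit m (p q : 'I_m) : delta_mx p q = E m p.+1 q.+1.
Proof. by apply/matrixP=> r c; rewrite EunitE mxE !eqSS. Qed.

Lemma Eunit_block n i j :
  E (n + n) i j =
  block_mx (E n i j) (E n i (j - n)) (E n (i - n) j) (E n (i - n) (j - n)).
Proof.
apply/matrixP=> r c; rewrite -(splitK r) -(splitK c).
case: (split r) => r'; case: (split c) => c' /=;
  rewrite ?block_mxEul ?block_mxEur ?block_mxEdl ?block_mxEdr !EunitE /=;
  congr (_%:R); congr (nat_of_bool _); congr andb; apply/eqP/eqP; lia.
Qed.

Lemma matrix_Eunit_ind n (P : 'M[F]_n -> Prop) :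
  P 0 -> (forall c A B, P A -> P B -> P (c *: A + B)) ->
  (forall p q : 'I_n, P (E n p.+1 q.+1)) -> forall A, P A.
Proof.
move=> P0 Plin PE A; rewrite [A]matrix_sum_delta.
have PD A1 A2 : P A1 -> P A2 -> P (A1 + A2) by move=> PA1; rewrite -[A1]scale1r; apply: Plin.
apply: big_ind => // p _; apply: big_ind => // q _.
by rewrite delta_mx_Eunit -[_ *: _]addr0; apply: Plin.
Qed.

End MatrixUnits.

Ltac Eunit_mul_simpl :=
  repeat match goal with |- context[@Eunit ?F ?m ?i ?j *m @Eunit _ _ ?k ?l] =>
    rewrite (@Eunit_mul F m i j k l);
    first [ rewrite (@ifT _ ((j == k) && (0 < j <= m))%N); [|lia]
          | rewrite (@ifF _ ((j == k) && (0 < j <= m))%N); [|lia] ] end.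

Section Blocks.
Variables (F : fieldType) (n : nat).
Local Notation E := (@Eunit F).
Implicit Types A B C D : 'M[F]_n.

Definition ur_mx B : 'M[F]_(n + n) := block_mx 0 B 0 0.
Definition dl_mx C : 'M[F]_(n + n) := block_mx 0 0 C 0.
Definition dg_mx A D : 'M[F]_(n + n) := block_mx A 0 0 D.

Lemma block_mx_split A B C D : block_mx A B C D = ur_mx B + dl_mx C + dg_mx A D.
Proof. by rewrite !add_block_mx !addr0 !add0r. Qed.

Lemma ur_mx_lin c B B' : ur_mx (c *: B + B') = c *: ur_mx B + ur_mx B'.
Proof. by rewrite scale_block_mx add_block_mx !scaler0 !addr0. Qed.

Lemma dl_mx_lin c C C' : dl_mx (c *: C + C') = c *: dl_mx C + dl_mx C'.
Proof. by rewrite scale_block_mx add_block_mx !scaler0 !addr0. Qed.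

Lemma dg_mx_lin c A D A' D' :
  dg_mx (c *: A + A') (c *: D + D') = c *: dg_mx A D + dg_mx A' D'.
Proof. by rewrite scale_block_mx add_block_mx !scaler0 !addr0. Qed.

Lemma ur_mxZ c B : ur_mx (c *: B) = c *: ur_mx B.
Proof. by rewrite scale_block_mx !scaler0. Qed.

Lemma dl_mxZ c C : dl_mx (c *: C) = c *: dl_mx C.
Proof. by rewrite scale_block_mx !scaler0. Qed.

Local Ltac expand_block_lie :=
  rewrite /lie !mulmx_block !mulmx0 !mul0mx ?addr0 ?add0r opp_block_mx add_block_mx
          ?oppr0 ?addr0 ?add0r ?subrr.

Lemma lie_dg_mx A D A' D' : lie (dg_mx A D) (dg_mx A' D') = dg_mx (lie A A') (lie D D').
Proof. by expand_block_lie. Qed.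

Lemma lie_dg_ur_mx A D B : lie (dg_mx A D) (ur_mx B) = ur_mx (A *m B - B *m D).
Proof. by expand_block_lie. Qed.

Lemma lie_dg_dl_mx A D C : lie (dg_mx A D) (dl_mx C) = dl_mx (D *m C - C *m A).
Proof. by expand_block_lie. Qed.

Lemma lie_ur_dl_mx B C : lie (ur_mx B) (dl_mx C) = dg_mx (B *m C) (- (C *m B)).
Proof. by expand_block_lie. Qed.

Ltac Eunit_block_simpl :=
  rewrite !Eunit_block; repeat match goal with |- context[@Eunit _ ?m ?i ?j] =>
    rewrite (@Eunit_eq0 _ m i j); [|lia] end;
  rewrite ?addKn -?addnS ?addKn ?subSnn.

Lemma psi_e_dg a i : (0 < i < n)%N -> psi_e n a i = dg_mx (E n i i.+1) (- E n i.+1 i).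
Proof.
move=> i_lt; rewrite /psi_e ifF; last by lia.
by Eunit_block_simpl; rewrite opp_block_mx add_block_mx !oppr0 ?addr0 ?add0r.
Qed.

Lemma psi_f_dg a i : (0 < i < n)%N -> psi_f n a i = dg_mx (E n i.+1 i) (- E n i i.+1).
Proof.
move=> i_lt; rewrite /psi_f ifF; last by lia.
by Eunit_block_simpl; rewrite opp_block_mx add_block_mx !oppr0 ?addr0 ?add0r.
Qed.

Lemma psi_e_ur a : (0 < n)%N -> psi_e n a n = ur_mx (E n n 1 + a^-1 *: E n 1 n).
Proof.
move=> n_gt0; rewrite /psi_e eqxx.
by Eunit_block_simpl; rewrite scale_block_mx add_block_mx !scaler0 ?addr0 ?add0r.
Qed.

Lemma psi_f_dl a : (0 < n)%N -> psi_f n a n = dl_mx (E n 1 n + a *: E n n 1).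
Proof.
move=> n_gt0; rewrite /psi_f eqxx.
by Eunit_block_simpl; rewrite scale_block_mx add_block_mx !scaler0 ?addr0 ?add0r.
Qed.

End Blocks.

Section SymplecticAlgebra.
Variables (F : fieldType) (n : nat).
Implicit Types A B C D : 'M[F]_n.

Lemma is_sp_blockP A B C D :
  is_sp (block_mx A B C D) <-> [/\ B^T = B, C^T = C & D = - A^T].
Proof.
rewrite /is_sp; have -> : (block_mx A B C D)^T *m Jsymp F n + Jsymp F n *m block_mx A B C D =
          block_mx (C - C^T) (A^T + D) (- D^T - A) (B^T - B).
  rewrite tr_block_mx !mulmx_block !mulmx0 !mul0mx !addr0 !add0r !mulmxN !mulNmx.
  by rewrite !mulmx1 !mul1mx add_block_mx; congr block_mx; rewrite addrC.
rewrite -(block_mx0 _ n n n n); split.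
  case/eq_block_mx=> CC AD DA BB; split; apply/eqP.
  - by rewrite -subr_eq0 BB.
  - by rewrite eq_sym -subr_eq0 CC.
  - by rewrite -addr_eq0 addrC AD.
by case=> -> -> ->; rewrite !subrr linearN /= trmxK opprK subrr.
Qed.

Lemma is_sp0 : is_sp (0 : 'M[F]_(n + n)).
Proof. by rewrite /is_sp trmx0 mul0mx mulmx0 addr0. Qed.

Lemma is_sp_lin c (X Y : 'M[F]_(n + n)) : is_sp X -> is_sp Y -> is_sp (c *: X + Y).
Proof.
rewrite /is_sp linearD linearZ /= mulmxDl mulmxDr -scalemxAl -scalemxAr addrACA.
by rewrite -scalerDr => -> ->; rewrite scaler0 addr0.
Qed.

Lemma is_sp_lie (X Y : 'M[F]_(n + n)) : is_sp X -> is_sp Y -> is_sp (lie X Y).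
Proof.
rewrite /is_sp => /eqP; rewrite addr_eq0 => /eqP XJ /eqP; rewrite addr_eq0 => /eqP YJ.
rewrite linearB /= !trmx_mul !mulmxBl !mulmxBr -!mulmxA XJ YJ !mulmxN !mulmxA XJ YJ.
by rewrite !mulNmx !opprK -!mulmxA addrC subrKA subrr.
Qed.

Lemma is_sl0 m : is_sl (0 : 'M[F]_m).
Proof. exact: mxtrace0. Qed.

Lemma is_sl_lin m c (X Y : 'M[F]_m) : is_sl X -> is_sl Y -> is_sl (c *: X + Y).
Proof. by rewrite /is_sl mxtraceD mxtraceZ => -> ->; rewrite mulr0 addr0. Qed.

Lemma is_sl_lie m (X Y : 'M[F]_m) : is_sl (lie X Y).
Proof. by rewrite /is_sl /lie mxtraceD mxtrace_mulC linearN /= subrr. Qed.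

Lemma is_sl_ur_mx B : is_sl (ur_mx B).
Proof. by rewrite /is_sl mxtrace_block mxtrace0 addr0. Qed.

Lemma is_sl_dl_mx C : is_sl (dl_mx C).
Proof. by rewrite /is_sl mxtrace_block mxtrace0 addr0. Qed.

Lemma is_sp_dg_mx A : is_sp (dg_mx A (- A^T)).
Proof. by apply/is_sp_blockP; rewrite trmx0. Qed.

Lemma is_sp_sl (M : 'M[F]_(n + n)) : is_sp M -> is_sl M.
Proof.
rewrite -[M]submxK => /is_sp_blockP[_ _ ->].
by rewrite /is_sl mxtrace_block linearN /= mxtrace_tr subrr.
Qed.

Lemma is_sp_ur_mx B : B^T = B -> is_sp (ur_mx B).
Proof. by move=> BB; apply/is_sp_blockP; rewrite trmx0 oppr0. Qed.

Lemma is_sp_dl_mx C : C^T = C -> is_sp (dl_mx C).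
Proof. by move=> CC; apply/is_sp_blockP; rewrite trmx0 oppr0. Qed.

End SymplecticAlgebra.

Section LieGenerated.
Variables (F : fieldType) (V : lmodType F) (br : V -> V -> V) (S : V -> Prop).
Local Notation L := (lie_gen br S).

Lemma lie_gen_lin c x y : L x -> L y -> L (c *: x + y).
Proof. by move=> Lx Ly; apply: lie_gen_add => //; apply: lie_gen_scale. Qed.

Lemma lie_gen_opp x : L x -> L (- x).
Proof. by rewrite -scaleN1r; apply: lie_gen_scale. Qed.

Lemma lie_gen_sub x y : L x -> L y -> L (x - y).
Proof. by move=> Lx Ly; apply: lie_gen_add => //; apply: lie_gen_opp. Qed.

Lemma lie_gen_sum (I : finType) (P : pred I) (f : I -> V) :
  (forall i, P i -> L (f i)) -> L (\sum_(i | P i) f i).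
Proof. by move=> Lf; apply: big_ind => //; [apply: lie_gen_zero | apply: lie_gen_add]. Qed.

End LieGenerated.

Section Components.
Variables (F : fieldType) (K m : nat) (S : {ffun 'I_K -> 'M[F]_m} -> Prop).
Local Notation L := (lie_gen (@lieK F K m) S).

Definition slot (i : 'I_K) (M : 'M[F]_m) : {ffun 'I_K -> 'M[F]_m} :=
  [ffun k => if k == i then M else 0].

(* Lagrange interpolation: prod_(j != i) (ad g - lam j) / (lam i - lam j)
   kills every component of x but the i-th. *)
Lemma lie_gen_eigen_slot (g x : {ffun 'I_K -> 'M[F]_m}) (lam : 'I_K -> F) i :
  L g -> L x -> (forall k, lie (g k) (x k) = lam k *: x k) ->
  (forall j, j != i -> lam i != lam j) -> L (slot i (x i)).
Proof.
move=> Lg Lx gx lam_inj.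
pose interp (s : seq 'I_K) :=
  [ffun k => (\prod_(j <- s) ((lam k - lam j) / (lam i - lam j))) *: x k].
have Linterp s : L (interp s).
  elim: s => [|j s IHs].
    by rewrite (_ : interp [::] = x) //; apply/ffunP=> k; rewrite ffunE big_nil scale1r.
  rewrite (_ : interp _ = (lam i - lam j)^-1 *: (lieK g (interp s) - lam j *: interp s)).
    by apply/lie_gen_scale/lie_gen_sub/lie_gen_scale => //; apply: lie_gen_br.
  apply/ffunP=> k; rewrite !ffunE big_cons /lie -scalemxAr -scalemxAl -scalerBr -/(lie _ _) gx.
  by rewrite !scalerA -scalerBl scalerA; congr (_ *: _); ring.
rewrite (_ : slot i (x i) = interp [seq j <- enum 'I_K | j != i]) //.
apply/ffunP=> k; rewrite !ffunE; case: (k =P i) => [-> | ki].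
  rewrite big1_seq ?scale1r // => j; rewrite mem_filter mem_enum andbT => ji.
  by rewrite divff // subr_eq0 lam_inj.
set P := \prod_(_ <- _) _; suff -> : P = 0 by rewrite scale0r.
apply/eqP; rewrite prodf_seq_eq0; apply/hasP; exists k => /=.
  by rewrite mem_filter mem_enum andbT; apply/eqP.
by rewrite subrr mul0r.
Qed.

Lemma ffun_sum_slot (x : {ffun 'I_K -> 'M[F]_m}) : x = \sum_i slot i (x i).
Proof.
apply/ffunP=> k; rewrite sum_ffunE (bigD1 k) //= big1 => [|j /negbTE jk].
  by rewrite !ffunE eqxx addr0.
by rewrite ffunE eq_sym jk.
Qed.

Lemma lie_gen_slot0 i : L (slot i 0).
Proof.
suff -> : slot i 0 = 0 by apply: lie_gen_zero.
by apply/ffunP=> k; rewrite !ffunE if_same.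
Qed.

Lemma lie_gen_slot_lin i c M N :
  L (slot i M) -> L (slot i N) -> L (slot i (c *: M + N)).
Proof.
move=> LM LN; rewrite (_ : slot i _ = c *: slot i M + slot i N); first exact: lie_gen_lin.
by apply/ffunP=> k; rewrite !ffunE; case: eqP; rewrite ?scaler0 ?addr0.
Qed.

Lemma lie_gen_slot_lie i M N : L (slot i M) -> L (slot i N) -> L (slot i (lie M N)).
Proof.
move=> LM LN; rewrite (_ : slot i _ = lieK (slot i M) (slot i N)); first exact: lie_gen_br.
by apply/ffunP=> k; rewrite !ffunE; case: eqP; rewrite /lie ?mul0mx ?subrr.
Qed.

End Components.

Section CornerGeneration.
Variables (F : fieldType) (n : nat).
Local Notation E := (@Eunit F).
Implicit Types A B C D : 'M[F]_n.

Lemma twisted_sym_surj (c : F) B : c ^+ 2 != 1 -> exists Y, B = Y + c *: Y^T.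
Proof.
move=> c2; have {}c2 : 1 - c ^+ 2 != 0 by rewrite subr_eq0 eq_sym.
set s := (1 - c ^+ 2)^-1.
exists (s *: (B - c *: B^T)); apply/matrixP=> i j; rewrite !mxE.
by rewrite -[LHS]mul1r -(mulVf c2) -/s; ring.
Qed.

Lemma lin_twisted_sym (c d : F) B B' :
  (c *: B + B') + d *: (c *: B + B')^T = c *: (B + d *: B^T) + (B' + d *: B'^T).
Proof. by rewrite linearD linearZ /= !scalerDr !scalerA [d * c]mulrC addrACA. Qed.

Lemma sym_mx_surj B : (2 : F) != 0 -> B^T = B -> exists Y, B = Y + Y^T.
Proof.
move=> two_neq0 BB; exists (2^-1 *: B); rewrite linearZ /= BB -scalerDl.
by rewrite (_ : 2^-1 + 2^-1 = 1) ?scale1r //; field.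
Qed.

Lemma sl_Eunit_ind (P : 'M[F]_n -> Prop) :
  P 0 -> (forall c A B, P A -> P B -> P (c *: A + B)) ->
  (forall p q : 'I_n, P (E n p.+1 q.+1 - (p == q)%:R *: E n 1 1)) ->
  forall N, \tr N = 0 -> P N.
Proof.
move=> P0 Plin PE N trN0.
have PD A1 A2 : P A1 -> P A2 -> P (A1 + A2) by move=> PA1; rewrite -[A1]scale1r; apply: Plin.
suff -> : N = \sum_p \sum_q N p q *: (E n p.+1 q.+1 - (p == q)%:R *: E n 1 1).
  apply: big_ind => // p _; apply: big_ind => // q _.
  by rewrite -[_ *: _]addr0; apply: Plin.
under eq_bigr => p _ do under eq_bigr => q _ do rewrite scalerBr.
under eq_bigr => p _ do rewrite sumrB.
rewrite sumrB.
have -> : \sum_p \sum_q N p q *: E n p.+1 q.+1 = N.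
  rewrite [RHS]matrix_sum_delta; apply: eq_bigr => p _; apply: eq_bigr => q _.
  by rewrite delta_mx_Eunit.
suff -> : \sum_p \sum_q N p q *: ((p == q)%:R *: E n 1 1) = 0 by rewrite subr0.
rewrite -[RHS](scale0r (E n 1 1)) -trN0 /mxtrace scaler_suml; apply: eq_bigr => p _.
rewrite (bigD1 p) //= eqxx scale1r big1 ?addr0 // => q /negbTE.
by rewrite eq_sym => ->; rewrite !scale0r scaler0.
Qed.

Section LieClosed.
Variable P : 'M[F]_(n + n) -> Prop.
Hypothesis P0 : P 0.
Hypothesis Plin : forall c X Y, P X -> P Y -> P (c *: X + Y).
Hypothesis Plie : forall X Y, P X -> P Y -> P (lie X Y).

Let PD X Y : P X -> P Y -> P (X + Y).
Proof. by move=> PX; rewrite -[X]scale1r; apply: Plin. Qed.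

Lemma sl_corner_generated :
  (forall B, P (ur_mx B)) -> (forall C, P (dl_mx C)) -> forall M, is_sl M -> P M.
Proof.
move=> Pur Pdl M; rewrite /is_sl -[M]submxK mxtrace_block block_mx_split.
set A := ulsubmx M; set D := drsubmx M => trM0.
have Pdg B C : P (dg_mx (B *m C) (- (C *m B))) by rewrite -lie_ur_dl_mx; apply: Plie.
apply: PD; first by apply: PD; [apply: Pur | apply: Pdl].
rewrite (_ : dg_mx A D = dg_mx A (- A) + dg_mx 0 (D + A)); last first.
  by rewrite add_block_mx !addr0 [D + A]addrC addKr.
apply: PD; first by have := Pdg A 1%:M; rewrite mulmx1 mul1mx.
have : \tr (D + A) = 0 by rewrite mxtraceD addrC.
apply: (@sl_Eunit_ind (fun N => P (dg_mx 0 N))); first by rewrite /dg_mx block_mx0.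
  by move=> c X Y PX PY; rewrite -[0]addr0 -{1}(scaler0 _ c) dg_mx_lin; apply: Plin.
move=> p q; have := ltn_ord p; have := ltn_ord q; case: (eqVneq p q) => [<- | pq] *.
  have := Plin (-1) (Pdg (E n 1 p.+1) (E n p.+1 1)) (Pdg (E n 1 1) (E n 1 1)).
  Eunit_mul_simpl; rewrite -dg_mx_lin !scaleN1r addNr opprK scale1r.
  by rewrite addrC.
have pq' : (p : nat) <> q by move/val_inj; apply/eqP.
rewrite scale0r subr0.
have := Pdg (- E n q.+1 q.+1) (E n p.+1 q.+1); rewrite mulNmx mulmxN opprK.
by Eunit_mul_simpl; rewrite oppr0.
Qed.

Lemma sp_corner_generated :
  (forall B, B^T = B -> P (ur_mx B)) -> (forall C, C^T = C -> P (dl_mx C)) ->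
  forall M, is_sp M -> P M.
Proof.
move=> Pur Pdl M; rewrite -[M]submxK => /is_sp_blockP[BB CC ->].
rewrite block_mx_split; apply: PD; first by apply: PD; [apply: Pur | apply: Pdl].
have Pdg B C : B^T = B -> C^T = C -> P (dg_mx (B *m C) (- (C *m B))).
  by move=> BB' CC'; rewrite -lie_ur_dl_mx; apply: Plie; [apply: Pur | apply: Pdl].
apply: (@matrix_Eunit_ind _ _ (fun A => P (dg_mx A (- A^T)))).
- by rewrite trmx0 oppr0 /dg_mx block_mx0.
- move=> c X Y PX PY; rewrite linearD linearZ /= opprD -scalerN dg_mx_lin.
  exact: Plin.
move=> p q; have := ltn_ord p; have := ltn_ord q; rewrite trmx_Eunit.
case: (eqVneq p q) => [<- | pq] *.
  have := Pdg _ _ (trmx_Eunit F n p.+1 p.+1) (trmx_Eunit F n p.+1 p.+1).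
  by Eunit_mul_simpl.
have pq' : (p : nat) <> q by move/val_inj; apply/eqP.
have := Pdg (E n p.+1 p.+1) (E n p.+1 q.+1 + E n q.+1 p.+1) (trmx_Eunit _ _ _ _).
rewrite linearD /= !trmx_Eunit addrC => /(_ erefl).
by rewrite mulmxDr mulmxDl; Eunit_mul_simpl; rewrite addr0 add0r.
Qed.

End LieClosed.
End CornerGeneration.

Lemma addrV_inj (F : fieldType) (x y : F) : x != 0 -> y != 0 ->
  x + x^-1 = y + y^-1 -> x = y \/ x * y = 1.
Proof.
move=> x0 y0 /eqP; rewrite -subr_eq0.
have -> : x + x^-1 - (y + y^-1) = (x - y) * (x * y - 1) / (x * y).
  by field; apply/andP.
rewrite !mulf_eq0 invr_eq0 mulf_eq0 (negbTE x0) (negbTE y0) !orbF !subr_eq0.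
by case/orP=> /eqP; [left | right].
Qed.

Section PsiGenerators.
Variables (F : fieldType) (n i : nat).
Hypothesis i_in : (0 < i <= n)%N.
Local Notation E := (@Eunit F).

Lemma is_sl_psi_e (b : F) : is_sl (psi_e n b i).
Proof.
have [i_lt | ->] : (0 < i < n)%N \/ i = n by lia.
  by rewrite psi_e_dg // -[E n i.+1 i]trmx_Eunit; apply/is_sp_sl/is_sp_dg_mx.
by rewrite psi_e_ur; [apply: is_sl_ur_mx | lia].
Qed.

Lemma is_sl_psi_f (b : F) : is_sl (psi_f n b i).
Proof.
have [i_lt | ->] : (0 < i < n)%N \/ i = n by lia.
  by rewrite psi_f_dg // -[E n i i.+1]trmx_Eunit; apply/is_sp_sl/is_sp_dg_mx.
by rewrite psi_f_dl; [apply: is_sl_dl_mx | lia].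
Qed.

Lemma is_sp_psi_e : is_sp (psi_e n (1 : F) i).
Proof.
have [i_lt | ->] : (0 < i < n)%N \/ i = n by lia.
  by rewrite psi_e_dg // -[E n i.+1 i]trmx_Eunit; apply: is_sp_dg_mx.
rewrite psi_e_ur; last by lia.
by apply: is_sp_ur_mx; rewrite invr1 scale1r linearD /= !trmx_Eunit addrC.
Qed.

Lemma is_sp_psi_f : is_sp (psi_f n (1 : F) i).
Proof.
have [i_lt | ->] : (0 < i < n)%N \/ i = n by lia.
  by rewrite psi_f_dg // -[E n i i.+1]trmx_Eunit; apply: is_sp_dg_mx.
rewrite psi_f_dl; last by lia.
by apply: is_sp_dl_mx; rewrite scale1r linearD /= !trmx_Eunit addrC.
Qed.

End PsiGenerators.

Lemma psiK_image_sl (F : fieldType) (n K : nat) (a : 'I_K -> F) x :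
  @psiK_image F n K a x -> forall k, is_sl (x k).
Proof.
elim=> {x} [x [i i_in [] ->] | | x y _ slx _ sly | c x _ slx | x y _ _ _ _] k;
  rewrite !ffunE.
- exact: is_sl_psi_e.
- exact: is_sl_psi_f.
- exact: is_sl_lie.
- exact: is_sl0.
- by rewrite -[x k]scale1r; apply: is_sl_lin.
- by rewrite -[c *: x k]addr0; apply: is_sl_lin => //; apply: is_sl0.
- exact: is_sl_lie.
Qed.

Lemma psiK_image_sp (F : fieldType) (n K : nat) (a : 'I_K -> F) k0 x :
  a k0 = 1 -> @psiK_image F n K a x -> is_sp (x k0).
Proof.
move=> ak0; elim=> {x} [x [i i_in [] ->] | | x y _ spx _ spy | c x _ spx | x y _ spx _ spy];
  rewrite !ffunE ?ak0.
- exact: is_sp_psi_e.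
- exact: is_sp_psi_f.
- by apply: is_sp_lie; [apply: is_sp_psi_e | apply: is_sp_psi_f].
- exact: is_sp0.
- by rewrite -[x k0]scale1r; apply: is_sp_lin.
- by rewrite -[c *: x k0]addr0; apply: is_sp_lin => //; apply: is_sp0.
- exact: is_sp_lie.
Qed.

Section PsiImage.
Variables (F : fieldType) (n K : nat) (a : 'I_K -> F).
Hypothesis n_ge2 : (2 <= n)%N.
Hypothesis a_neq0 : forall k, a k != 0.
Local Notation E := (@Eunit F).
Local Notation V := {ffun 'I_K -> 'M[F]_(n + n)}.
Local Notation L := (@psiK_image F n K a).
Implicit Types A B C D Y Z : 'M[F]_n.

Lemma im_psi_e i : (0 < i <= n)%N -> L [ffun k => psi_e n (a k) i].
Proof. by move=> i_in; apply: lie_gen_base; exists i => //; constructor 1. Qed.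

Lemma im_psi_f i : (0 < i <= n)%N -> L [ffun k => psi_f n (a k) i].
Proof. by move=> i_in; apply: lie_gen_base; exists i => //; constructor 2. Qed.

Definition diag_elt A : V := [ffun => dg_mx A (- A^T)].

Lemma im_diag_elt0 : L (diag_elt 0).
Proof.
suff -> : diag_elt 0 = 0 by apply: lie_gen_zero.
by apply/ffunP=> k; rewrite !ffunE trmx0 oppr0 /dg_mx block_mx0.
Qed.

Lemma im_diag_elt_lin c A B : L (diag_elt A) -> L (diag_elt B) -> L (diag_elt (c *: A + B)).
Proof.
move=> LA LB; rewrite (_ : diag_elt _ = c *: diag_elt A + diag_elt B).
  exact: lie_gen_lin.
by apply/ffunP=> k; rewrite !ffunE -dg_mx_lin linearD linearZ /= opprD scalerN.
Qed.

Lemma im_diag_elt_scale c A : L (diag_elt A) -> L (diag_elt (c *: A)).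
Proof. by move=> LA; rewrite -[_ *: _]addr0; apply: im_diag_elt_lin (im_diag_elt0). Qed.

Lemma im_diag_elt_lie A B : L (diag_elt A) -> L (diag_elt B) -> L (diag_elt (lie A B)).
Proof.
move=> LA LB; rewrite (_ : diag_elt _ = lieK (diag_elt A) (diag_elt B)).
  exact: lie_gen_br.
apply/ffunP=> k; rewrite !ffunE lie_dg_mx; congr dg_mx.
by rewrite /lie !mulmxN !mulNmx !opprK linearB /= !trmx_mul opprB.
Qed.

Lemma im_diag_elt_super i : (0 < i < n)%N -> L (diag_elt (E n i i.+1)).
Proof.
move=> i_in; rewrite (_ : diag_elt _ = [ffun k => psi_e n (a k) i]).
  by apply: im_psi_e; lia.
by apply/ffunP=> k; rewrite !ffunE psi_e_dg // trmx_Eunit.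
Qed.

Lemma im_diag_elt_sub i : (0 < i < n)%N -> L (diag_elt (E n i.+1 i)).
Proof.
move=> i_in; rewrite (_ : diag_elt _ = [ffun k => psi_f n (a k) i]).
  by apply: im_psi_f; lia.
by apply/ffunP=> k; rewrite !ffunE psi_f_dg // trmx_Eunit.
Qed.

Hypothesis two_neq0 : (2 : F) != 0.

(* [e_i, f_i] gives E_ii - E_(i+1)(i+1) for i < n and [e_n, f_n] gives
   E_11 + E_nn; inverting 2 separates E_11. *)
Lemma im_diag_elt_Eunit_diag p : (0 < p <= n)%N -> L (diag_elt (E n p p)).
Proof.
have Lh i : (0 < i < n)%N -> L (diag_elt (E n i i - E n i.+1 i.+1)).
  move=> i_in; have := im_diag_elt_lie (im_diag_elt_super i_in) (im_diag_elt_sub i_in).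
  by rewrite /lie; Eunit_mul_simpl.
have Lhn : L (diag_elt (E n 1 1 + E n n n)).
  rewrite (_ : diag_elt _ = lieK [ffun k => psi_e n (a k) n] [ffun k => psi_f n (a k) n]).
    by apply: lie_gen_br; [apply: im_psi_e | apply: im_psi_f]; lia.
  apply/ffunP=> k; rewrite !ffunE psi_e_ur ?psi_f_dl; try lia.
  rewrite lie_ur_dl_mx !mulmxDl !mulmxDr -!scalemxAl -!scalemxAr; Eunit_mul_simpl.
  rewrite !scaler0 !addr0 !add0r !scalerA mulVf // mulfV // !scale1r.
  by rewrite linearD /= !trmx_Eunit addrC opprD.
have Ldiff p' : (0 < p' <= n)%N -> L (diag_elt (E n 1 1 - E n p' p')).
  elim: p' => [|p' IHp] p'_in; first by lia.
  have [-> | p'_gt0] := posnP p'; first by rewrite subrr; apply: im_diag_elt0.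
  rewrite (_ : _ - _ = 1 *: (E n 1 1 - E n p' p') + (E n p' p' - E n p'.+1 p'.+1)).
    by apply: im_diag_elt_lin; [apply: IHp | apply: Lh]; lia.
  by rewrite scale1r addrA subrK.
have L11 : L (diag_elt (E n 1 1)).
  rewrite (_ : E n 1 1 = 2^-1 *: (E n 1 1 + E n n n) + 2^-1 *: (E n 1 1 - E n n n)).
    by apply: im_diag_elt_lin => //; apply/im_diag_elt_scale/Ldiff; lia.
  by apply/matrixP=> r c; rewrite !mxE; field.
move=> p_in; rewrite (_ : E n p p = -1 *: (E n 1 1 - E n p p) + E n 1 1).
  by apply: im_diag_elt_lin => //; apply: Ldiff.
by rewrite scaleN1r opprB subrK.
Qed.

Lemma im_diag_elt_Eunit p q : (0 < p <= n)%N -> (0 < q <= n)%N -> L (diag_elt (E n p q)).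
Proof.
suff Lband d r : (0 < r)%N -> (r + d <= n)%N ->
    L (diag_elt (E n r (r + d))) /\ L (diag_elt (E n (r + d) r)).
  move=> p_in q_in; case: (leqP p q) => pq.
    by have [] := Lband (q - p)%N p ltac:(lia) ltac:(lia); rewrite subnKC.
  by have [] := Lband (p - q)%N q ltac:(lia) ltac:(lia); rewrite subnKC //; lia.
elim: d => [|d IHd] r_gt0 rd_le.
  by rewrite addn0; split; apply: im_diag_elt_Eunit_diag; lia.
have [IH1 IH2] := IHd r_gt0 ltac:(lia); rewrite addnS; split.
  have := im_diag_elt_lie IH1 (@im_diag_elt_super (r + d) ltac:(lia)).
  by rewrite /lie; Eunit_mul_simpl; rewrite subr0.
have := im_diag_elt_lie (@im_diag_elt_sub (r + d) ltac:(lia)) IH2.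
by rewrite /lie; Eunit_mul_simpl; rewrite subr0.
Qed.

Lemma im_diag_elt A : L (diag_elt A).
Proof.
apply: (@matrix_Eunit_ind _ _ (fun A => L (diag_elt A))).
- exact: im_diag_elt0.
- exact: im_diag_elt_lin.
move=> p q.
by apply: im_diag_elt_Eunit; have := ltn_ord p; have := ltn_ord q; lia.
Qed.

Definition upper_elt Y : V := [ffun k => ur_mx (Y + (a k)^-1 *: Y^T)].
Definition lower_elt Z : V := [ffun k => dl_mx (Z + a k *: Z^T)].

Lemma im_upper_elt_lin c Y Y' :
  L (upper_elt Y) -> L (upper_elt Y') -> L (upper_elt (c *: Y + Y')).
Proof.
move=> LY LY'; rewrite (_ : upper_elt _ = c *: upper_elt Y + upper_elt Y').
  exact: lie_gen_lin.
by apply/ffunP=> k; rewrite !ffunE -ur_mx_lin lin_twisted_sym.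
Qed.

Lemma im_lower_elt_lin c Z Z' :
  L (lower_elt Z) -> L (lower_elt Z') -> L (lower_elt (c *: Z + Z')).
Proof.
move=> LZ LZ'; rewrite (_ : lower_elt _ = c *: lower_elt Z + lower_elt Z').
  exact: lie_gen_lin.
by apply/ffunP=> k; rewrite !ffunE -dl_mx_lin lin_twisted_sym.
Qed.

Lemma im_upper_elt_conj A Y : L (upper_elt Y) -> L (upper_elt (A *m Y + Y *m A^T)).
Proof.
move=> LY; rewrite (_ : upper_elt _ = lieK (diag_elt A) (upper_elt Y)).
  by apply: lie_gen_br => //; apply: im_diag_elt.
apply/ffunP=> k; rewrite !ffunE lie_dg_ur_mx linearD /= !trmx_mul trmxK.
rewrite mulmxDr mulmxDl !mulmxN opprD !opprK -scalemxAl -scalemxAr scalerDr.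
by congr ur_mx; apply/matrixP=> r s; rewrite !mxE; ring.
Qed.

Lemma im_lower_elt_conj A Z : L (lower_elt Z) -> L (lower_elt (A^T *m Z + Z *m A)).
Proof.
move=> LZ; rewrite (_ : lower_elt _ = - lieK (diag_elt A) (lower_elt Z)).
  by apply/lie_gen_opp/lie_gen_br => //; apply: im_diag_elt.
apply/ffunP=> k; rewrite !ffunE lie_dg_dl_mx linearD /= !trmx_mul trmxK.
rewrite mulmxDr mulmxDl !mulNmx -scalemxAl -scalemxAr scalerDr !opprD ?opprK.
rewrite -[RHS]scaleN1r -dl_mxZ.
by congr dl_mx; apply/matrixP=> r s; rewrite !mxE; ring.
Qed.

Lemma im_upper_elt0 : L (upper_elt 0).
Proof.
suff -> : upper_elt 0 = 0 by apply: lie_gen_zero.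
by apply/ffunP=> k; rewrite !ffunE trmx0 scaler0 addr0 /ur_mx block_mx0.
Qed.

Lemma im_lower_elt0 : L (lower_elt 0).
Proof.
suff -> : lower_elt 0 = 0 by apply: lie_gen_zero.
by apply/ffunP=> k; rewrite !ffunE trmx0 scaler0 addr0 /dl_mx block_mx0.
Qed.

Lemma im_upper_elt Y : L (upper_elt Y).
Proof.
have Ln1 : L (upper_elt (E n n 1)).
  rewrite (_ : upper_elt _ = [ffun k => psi_e n (a k) n]); first by apply: im_psi_e; lia.
  by apply/ffunP=> k; rewrite !ffunE psi_e_ur ?trmx_Eunit //; lia.
have Lr1 r : (0 < r <= n)%N -> L (upper_elt (E n r 1)).
  move=> r_in; have := im_upper_elt_conj (E n r n) Ln1.
  by rewrite trmx_Eunit; Eunit_mul_simpl; rewrite addr0.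
have Lrq r q : (0 < r <= n)%N -> (0 < q <= n)%N -> L (upper_elt (E n r q)).
  move=> r_in q_in; have := im_upper_elt_conj (E n q 1) (Lr1 r r_in); rewrite trmx_Eunit.
  case: (r =P 1%N) => [r1 | r1]; Eunit_mul_simpl; last by rewrite add0r.
  rewrite r1 => L1q; have := im_upper_elt_lin (-1) (Lr1 q q_in) L1q.
  by rewrite scaleN1r addKr.
apply: (@matrix_Eunit_ind _ _ (fun Y => L (upper_elt Y))).
- exact: im_upper_elt0.
- exact: im_upper_elt_lin.
by move=> p q; apply: Lrq; have := ltn_ord p; have := ltn_ord q; lia.
Qed.

Lemma im_lower_elt Z : L (lower_elt Z).
Proof.
have L1n : L (lower_elt (E n 1 n)).
  rewrite (_ : lower_elt _ = [ffun k => psi_f n (a k) n]); first by apply: im_psi_f; lia.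
  by apply/ffunP=> k; rewrite !ffunE psi_f_dl ?trmx_Eunit //; lia.
have L1r r : (0 < r <= n)%N -> L (lower_elt (E n 1 r)).
  move=> r_in; have := im_lower_elt_conj (E n n r) L1n.
  by rewrite trmx_Eunit; Eunit_mul_simpl; rewrite add0r.
have Lpr p r : (0 < p <= n)%N -> (0 < r <= n)%N -> L (lower_elt (E n p r)).
  move=> p_in r_in; have := im_lower_elt_conj (E n 1 p) (L1r r r_in); rewrite trmx_Eunit.
  case: (r =P 1%N) => [r1 | r1]; Eunit_mul_simpl; last by rewrite addr0.
  rewrite r1 => Lp1; have := im_lower_elt_lin (-1) (L1r p p_in) Lp1.
  by rewrite scaleN1r addrC addrK.
apply: (@matrix_Eunit_ind _ _ (fun Z => L (lower_elt Z))).
- exact: im_lower_elt0.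
- exact: im_lower_elt_lin.
by move=> p q; apply: Lpr; have := ltn_ord p; have := ltn_ord q; lia.
Qed.

Definition mu k := (1 + (a k)^-1) * (1 + a k).
Definition sep_elt : V := lieK (upper_elt 1%:M) (lower_elt 1%:M).

Lemma sep_eltE k : sep_elt k = dg_mx (mu k *: 1%:M) (- (mu k *: 1%:M)).
Proof.
have oneZ c : 1%:M + c *: 1%:M = (1 + c) *: (1%:M : 'M[F]_n) by rewrite scalerDl scale1r.
rewrite !ffunE lie_ur_dl_mx trmx1 !oneZ -!scalemxAl -!scalemxAr !mulmx1 !scalerA.
by rewrite /mu [(1 + a k) * _]mulrC.
Qed.

Lemma lie_sep_upper k Y : lie (sep_elt k) (upper_elt Y k) = (2 * mu k) *: upper_elt Y k.
Proof.
rewrite sep_eltE ffunE lie_dg_ur_mx mulmxN -scalemxAl -scalemxAr mul1mx mulmx1 opprK.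
by rewrite -scalerDl -ur_mxZ mulr_natl mulr2n.
Qed.

Lemma lie_sep_lower k Z : lie (sep_elt k) (lower_elt Z k) = - (2 * mu k) *: lower_elt Z k.
Proof.
rewrite sep_eltE ffunE lie_dg_dl_mx mulNmx -scalemxAl -scalemxAr mul1mx mulmx1.
by rewrite -opprD -scalerDl -scaleNr dl_mxZ mulr_natl mulr2n.
Qed.

Lemma im_sep_elt : L sep_elt.
Proof. exact: lie_gen_br (im_upper_elt _) (im_lower_elt _). Qed.

Hypothesis a_sep : forall k j : 'I_K, k != j -> a k != a j /\ a k != (a j)^-1.

Lemma mu_inj i j : j != i -> mu i != mu j.
Proof.
move=> ji; have [aji aji'] := a_sep ji; apply/eqP=> mu_eq.
have muE k : mu k = 2 + (a k + (a k)^-1) by rewrite /mu; field; apply: a_neq0.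
have : a i + (a i)^-1 = a j + (a j)^-1 by apply: (@addrI _ 2); rewrite -!muE.
case/(addrV_inj (a_neq0 i) (a_neq0 j)) => [aij | aij].
  by rewrite aij eqxx in aji.
by rewrite -[a j](mulKf (a_neq0 i)) aij mulr1 eqxx in aji'.
Qed.

Lemma im_slot_upper i Y : L (slot i (ur_mx (Y + (a i)^-1 *: Y^T))).
Proof.
have -> : ur_mx (Y + (a i)^-1 *: Y^T) = upper_elt Y i by rewrite ffunE.
apply: (lie_gen_eigen_slot im_sep_elt (im_upper_elt Y) (lie_sep_upper^~ Y)) => j ji.
by rewrite (inj_eq (mulfI two_neq0)) mu_inj.
Qed.

Lemma im_slot_lower i Z : L (slot i (dl_mx (Z + a i *: Z^T))).
Proof.
have -> : dl_mx (Z + a i *: Z^T) = lower_elt Z i by rewrite ffunE.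
apply: (lie_gen_eigen_slot im_sep_elt (im_lower_elt Z) (lie_sep_lower^~ Z)) => j ji.
by rewrite eqr_opp (inj_eq (mulfI two_neq0)) mu_inj.
Qed.

Lemma im_slot_sl i M : a i != 1 -> a i != -1 -> is_sl M -> L (slot i M).
Proof.
move=> ai1 aiN1; have ai2 : a i ^+ 2 != 1 by rewrite sqrf_eq1 negb_or ai1.
apply: (@sl_corner_generated _ _ (fun M => L (slot i M))).
- exact: lie_gen_slot0.
- exact: lie_gen_slot_lin.
- exact: lie_gen_slot_lie.
- move=> B; have [|Y ->] := @twisted_sym_surj _ _ (a i)^-1 B.
    by rewrite exprVn invr_eq1.
  exact: im_slot_upper.
- by move=> C; have [Z ->] := twisted_sym_surj C ai2; apply: im_slot_lower.
Qed.

Lemma im_slot_sp i M : a i = 1 -> is_sp M -> L (slot i M).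
Proof.
move=> ai1; apply: (@sp_corner_generated _ _ (fun M => L (slot i M))).
- exact: lie_gen_slot0.
- exact: lie_gen_slot_lin.
- exact: lie_gen_slot_lie.
- move=> B /(sym_mx_surj two_neq0) [Y ->].
  by have := im_slot_upper i Y; rewrite ai1 invr1 scale1r.
- move=> C /(sym_mx_surj two_neq0) [Z ->].
  by have := im_slot_lower i Z; rewrite ai1 scale1r.
Qed.

Lemma psiK_imageP k0 x : a k0 = 1 -> (forall k, k != k0 -> a k != -1) ->
  L x <-> is_sp (x k0) /\ forall k, is_sl (x k).
Proof.
move=> ak0 aN1; split=> [Lx | [sp_x sl_x]].
  split; [exact: psiK_image_sp Lx | exact: psiK_image_sl Lx].
rewrite (ffun_sum_slot x); apply: lie_gen_sum => k _.
have [-> | kk0] := eqVneq k k0; first exact: im_slot_sp.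
apply: im_slot_sl; rewrite ?aN1 //.
by have [+ _] := a_sep kk0; rewrite ak0.
Qed.

End PsiImage.

Lemma lie_iso_sp_sl (F : fieldType) (n K : nat)
    (P : {ffun 'I_K.+1 -> 'M[F]_(n + n)} -> Prop) :
  (forall x, P x <-> is_sp (x ord0) /\ forall k, is_sl (x k)) ->
  lie_iso (@lieK F K.+1 (n + n)) (@lie_sum F n K.+1) P (@sp_sl_sum F n K.+1).
Proof.
move=> PE; exists (fun x : {ffun 'I_K.+1 -> 'M[F]_(n + n)} =>
  (x ord0, [ffun k : 'I_K => x (lift ord0 k)])); split.
- by move=> x /PE[sp_x sl_x]; split=> //= k; rewrite ffunE.
- by move=> c x y _ _; congr (_, _); [rewrite !ffunE | apply/ffunP=> k; rewrite !ffunE].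
- by move=> x y _ _; congr (_, _); [rewrite ffunE | apply/ffunP=> k; rewrite !ffunE].
- move=> x y _ _ [xy0 /ffunP xy]; apply/ffunP=> k.
  by case: (unliftP ord0 k) => [j -> | ->] //; have := xy j; rewrite !ffunE.
move=> [z0 z] [/= sp_z0 sl_z].
exists [ffun k => if unlift ord0 k is Some j then z j else z0].
  apply/PE; rewrite ffunE unlift_none; split=> // k; rewrite ffunE.
  by case: (unlift ord0 k) => [j|] //; apply: is_sp_sl.
by congr (_, _); [rewrite ffunE unlift_none | apply/ffunP=> k; rewrite !ffunE liftK].
Qed.

Unset Implicit Arguments.

Theorem lemma5p2 (R : realType) (n K : nat) (a : 'I_K -> R[i]) :
  (3 <= n)%N -> (1 <= K)%N ->
  (forall k, a k != 0) ->
  (forall k j : 'I_K, k != j -> a k != a j /\ a k != (a j)^-1) ->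
  (forall k : 'I_K, val k = 0%N -> a k = 1) ->
  (forall k : 'I_K, val k != 0%N -> a k != -1) ->
  lie_iso (@lieK _ K (n + n)) (@lie_sum _ n K)
    (@psiK_image _ n K a) (@sp_sl_sum _ n K).
Proof.
case: K a => // K a n_ge3 _ a_neq0 a_sep a0 aN1.
apply: lie_iso_sp_sl => x; apply: psiK_imageP => //.
- exact: ltnW.
- by rewrite pnatr_eq0.
- exact: a0.
Qed.
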